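(* Fix integers $\delta,r,t$ with $0\le\delta\le d$ and $0\le r,t\le d-\delta$. Let $(A;\{E_i\}_{i=0}^\delta;A^*;\{E^*_i\}_{i=0}^\delta)$ be a tridiagonal system over $\mathbb{F}$ on a vector space $V$, with eigenvalue sequence $\theta_t,\theta_{t+1},\dots,\theta_{t+\delta}$ and dual eigenvalue sequence $\theta^*_r,\theta^*_{r+1},\dots,\theta^*_{r+\delta}$. Then there exists a $T$-module structure on $V$ such that (i) $a$ acts as $A$ and $a^*$ acts as $A^*$; (ii) for $0\le i\le d$, $e_i$ acts as $E_{i-t}$ if $t\le i\le t+\delta$ and as $0$ otherwise; (iii) for $0\le i\le d$, $e^*_i$ acts as $E^*_{i-r}$ if $r\le i\le r+\delta$ and as $0$ otherwise. This $T$-module is irreducible.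
   Context: $\mathbb{F}$ is a field, $d\ge0$, and $\{\theta_i\}_{i=0}^d$, $\{\theta^*_i\}_{i=0}^d$ are scalars in $\mathbb{F}$ with $\theta_i\ne\theta_j$, $\theta^*_i\ne\theta^*_j$ for $i\ne j$, such that $\frac{\theta_{i-2}-\theta_{i+1}}{\theta_{i-1}-\theta_i}$ and $\frac{\theta^*_{i-2}-\theta^*_{i+1}}{\theta^*_{i-1}-\theta^*_i}$ are equal and independent of $i$ for $2\le i\le d-1$. $T$ is the associative $\mathbb{F}$-algebra with $1$ generated by $a,e_0,\dots,e_d,a^*,e^*_0,\dots,e^*_d$ with relations $e_ie_j=\delta_{ij}e_i$, $e^*_ie^*_j=\delta_{ij}e^*_i$, $\sum_ie_i=\sum_ie^*_i=1$, $a=\sum_i\theta_ie_i$, $a^*=\sum_i\theta^*_ie^*_i$, and $e^*_ia^ke^*_j=0$, $e_i{a^*}^ke_j=0$ whenever $0\le i,j,k\le d$ and $k<|i-j|$. Tridiagonal pair on a finite-dimensional nonzero space $V$: diagonalizable linear maps $A,A^*$ such that some ordering $V_0,\dots,V_\delta$ of the eigenspaces of $A$ satisfies $A^*V_i\subseteq V_{i-1}+V_i+V_{i+1}$, some ordering $V^*_0,\dots,V^*_\delta$ of the eigenspaces of $A^*$ satisfies $AV^*_i\subseteq V^*_{i-1}+V^*_i+V^*_{i+1}$ (out-of-range terms zero), and no subspace $W\ne0,V$ is invariant under both (such orderings are standard). A tridiagonal system $(A;\{E_i\}_{i=0}^\delta;A^*;\{E^*_i\}_{i=0}^\delta)$ is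 a tridiagonal pair with standard orderings of the primitive idempotents of $A$ and $A^*$; its eigenvalue sequence lists the eigenvalue of $A$ on $E_iV$, and its dual eigenvalue sequence the eigenvalue of $A^*$ on $E^*_iV$. *)

(* Finite-dimensional vector space V = F^n, modelled as row
   vectors 'rV[F]_n; linear maps are n x n matrices acting on the right
   (v |-> v *m M). *)
From HB Require Import structures.
From mathcomp Require Import all_boot all_order all_algebra.
Set Implicit Arguments. Unset Strict Implicit. Unset Printing Implicit Defensive.
Import Order.TTheory GRing.Theory Num.Theory.
Local Open Scope ring_scope.

Section Defs.
Variables (F : fieldType) (n : nat).

Definition distinct_upto (d : nat) (th : nat -> F) :=
  forall i j, (i <= d)%N -> (j <= d)%N -> i != j -> th i != th j.

Definition scalars_ok (d : nat) (th ths : nat -> F) :=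
  [/\ distinct_upto d th, distinct_upto d ths &
      exists beta : F, forall i, (2 <= i)%N -> (i <= d.-1)%N ->
        (th (i - 2)%N - th i.+1) / (th i.-1 - th i) = beta /\
        (ths (i - 2)%N - ths i.+1) / (ths i.-1 - ths i) = beta].

(* E_0..E_delta is the sequence of primitive idempotents of A with
   eigenvalue sequence th_0..th_delta: A is diagonalizable with exactly the
   (distinct) eigenvalues th_0..th_delta, i.e. V is the (necessarily direct)
   sum of the nonzero eigenspaces V_j, and E_i is the projection onto V_i
   along the other V_j (it is the identity on V_i and kills V_j, j <> i). *)
Definition prim_idems (delta : nat) (A : 'M[F]_n) (E : nat -> 'M[F]_n)
    (th : nat -> F) :=
  [/\ distinct_upto delta th,
      forall i, (i <= delta)%N -> eigenvalue A (th i),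
      (\sum_(0 <= j < delta.+1) eigenspace A (th j) == 1%:M)%MS &
      forall i j, (i <= delta)%N -> (j <= delta)%N ->
        eigenspace A (th j) *m E i =
          if i == j then eigenspace A (th j) else 0].

(* Tridiagonal system (A; {E_i}; A*; {E*_i}) with eigenvalue sequence th and
   dual eigenvalue sequence ths.  E_i V is the row space of E_i. *)
Definition TD_system (delta : nat) (A : 'M[F]_n) (E : nat -> 'M[F]_n)
    (As : 'M[F]_n) (Es : nat -> 'M[F]_n) (th ths : nat -> F) :=
  [/\ (0 < n)%N,
      prim_idems delta A E th /\ prim_idems delta As Es ths,
      forall i, (i <= delta)%N ->
        (E i *m As <= \sum_(0 <= j < delta.+1 | (i <= j.+1)%N && (j <= i.+1)%N) E j)%MS,
      forall i, (i <= delta)%N ->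
        (Es i *m A <= \sum_(0 <= j < delta.+1 | (i <= j.+1)%N && (j <= i.+1)%N) Es j)%MS &
      forall W : 'M[F]_n, (W *m A <= W)%MS -> (W *m As <= W)%MS ->
        (W == (0 : 'M[F]_n))%MS || (W == 1%:M)%MS].

(* A T-module structure on V (T = T(d, th, ths) given by generators and
   relations): images ta, te_i, tas, tes_i of the generators
   a, e_i, a*, e*_i satisfying the defining relations of T. *)
Definition T_module (d : nat) (th ths : nat -> F)
    (ta : 'M[F]_n) (te : nat -> 'M[F]_n) (tas : 'M[F]_n) (tes : nat -> 'M[F]_n) :=
  [/\ (forall i j, (i <= d)%N -> (j <= d)%N ->
        te i *m te j = if i == j then te i else 0) /\
      (forall i j, (i <= d)%N -> (j <= d)%N ->
        tes i *m tes j = if i == j then tes i else 0),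
      \sum_(0 <= i < d.+1) te i = 1%:M /\ \sum_(0 <= i < d.+1) tes i = 1%:M,
      ta = \sum_(0 <= i < d.+1) th i *: te i /\
      tas = \sum_(0 <= i < d.+1) ths i *: tes i,
      (forall i j k, (i <= d)%N -> (j <= d)%N -> (k <= d)%N ->
        (k < maxn i j - minn i j)%N -> tes i *m ta ^+ k *m tes j = 0) &
      (forall i j k, (i <= d)%N -> (j <= d)%N -> (k <= d)%N ->
        (k < maxn i j - minn i j)%N -> te i *m tas ^+ k *m te j = 0)].

Definition T_irreducible (d : nat)
    (ta : 'M[F]_n) (te : nat -> 'M[F]_n) (tas : 'M[F]_n) (tes : nat -> 'M[F]_n) :=
  (0 < n)%N /\
  forall W : 'M[F]_n,
    (W *m ta <= W)%MS -> (W *m tas <= W)%MS ->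
    (forall i, (i <= d)%N -> (W *m te i <= W)%MS) ->
    (forall i, (i <= d)%N -> (W *m tes i <= W)%MS) ->
    (W == (0 : 'M[F]_n))%MS || (W == 1%:M)%MS.

End Defs.

(** The idempotents [E_i] of a tridiagonal system are indexed by [0..delta], while
    [T] has idempotents indexed by [0..d]; padding, i.e. placing [E_i] at position
    [t + i] and [0] elsewhere, keeps them orthogonal idempotents summing to [1],
    and it turns the eigenvalue sequence [th (t + j)] into the expansion
    [A = \sum_i th i *: e_i].  The relations [e*_i a^k e*_j = 0] for
    [k < |i - j|] follow by induction on [k] from the tridiagonality of [A] on the
    [E*_i V]: multiplying by [A] moves [E*_i V] at most one step.  A [T]-invariant
    subspace is invariant under [A] and [A*], so irreducibility is inherited from
    the tridiagonal pair. *)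
From HB Require Import structures.
From mathcomp Require Import all_boot all_order all_algebra.
From mathcomp Require Import zify.
Set Implicit Arguments. Unset Strict Implicit. Unset Printing Implicit Defensive.
Import Order.TTheory GRing.Theory Num.Theory.
Local Open Scope ring_scope.

Section PaddedIdempotents.
Variables (F : fieldType) (n : nat).
Implicit Types (A B M N : 'M[F]_n) (E S : nat -> 'M[F]_n).

Lemma eq_mx_on_spanning S m M N :
  (\sum_(0 <= k < m.+1) S k == 1%:M)%MS ->
  (forall k, (k <= m)%N -> S k *m M = S k *m N) -> M = N.
Proof.
move=> /andP[_ full_sub] eqS.
suff : (1%:M <= kermx (M - N))%MS by rewrite sub_kermx mul1mx subr_eq0 => /eqP.
apply: submx_trans full_sub _; rewrite big_seq.
apply: (big_ind (fun X : 'M[F]_n => X <= kermx (M - N))%MS).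
- exact: sub0mx.
- by move=> X Y sX sY; rewrite addsmx_sub sX sY.
- move=> k; rewrite mem_index_iota => /andP[_ ltk].
  by rewrite sub_kermx mulmxBr eqS ?subrr.
Qed.

Lemma prim_idems_orthogonal delta A E th : prim_idems delta A E th ->
  forall i j, (i <= delta)%N -> (j <= delta)%N ->
    E i *m E j = if i == j then E i else 0.
Proof.
case=> _ _ span projE i j le_i le_j.
apply: (eq_mx_on_spanning (S := fun k => eigenspace A (th k))) span _ => k le_k.
rewrite /= mulmxA projE //.
have [<-|neq_ik] := eqVneq i k; last first.
  by rewrite mul0mx; case: (i == j); rewrite ?mulmx0 // projE // (negbTE neq_ik).
by case: (eqVneq i j) => [<-//|neq_ij]; rewrite mulmx0 projE // eq_sym (negbTE neq_ij).
Qed.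

Lemma tridiag_mul_exp_eq0 delta E B :
  (forall i j, (i <= delta)%N -> (j <= delta)%N ->
     E i *m E j = if i == j then E i else 0) ->
  (forall i, (i <= delta)%N ->
     (E i *m B <= \sum_(0 <= j < delta.+1 | (i <= j.+1)%N && (j <= i.+1)%N) E j)%MS) ->
  forall k i j, (i <= delta)%N -> (j <= delta)%N -> (k < maxn i j - minn i j)%N ->
    E i *m B ^+ k *m E j = 0.
Proof.
move=> orthE triB; elim=> [|k IHk] i j le_i le_j lt_k.
  by rewrite expr0 -idmxE mulmx1 orthE //; case: eqP => // eq_ij; lia.
rewrite exprS -mulmxE mulmxA -mulmxA.
apply/eqP; rewrite -sub_kermx; apply: submx_trans (triB i le_i) _.
rewrite big_seq_cond.
apply: (big_ind (fun X : 'M[F]_n => X <= kermx (B ^+ k *m E j))%MS).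
- exact: sub0mx.
- by move=> X Y sX sY; rewrite addsmx_sub sX sY.
- move=> l; rewrite mem_index_iota => /andP[/andP[_ lt_l] /andP[le_il le_li]].
  by rewrite sub_kermx mulmxA IHk //; lia.
Qed.

Definition pad_idems t delta E i :=
  if (t <= i)%N && (i <= t + delta)%N then E (i - t)%N else 0.

Lemma pad_idems_orthogonal t delta E :
  (forall i j, (i <= delta)%N -> (j <= delta)%N ->
     E i *m E j = if i == j then E i else 0) ->
  forall i j, pad_idems t delta E i *m pad_idems t delta E j =
    if i == j then pad_idems t delta E i else 0.
Proof.
move=> orthE i j; rewrite /pad_idems.
case: ifP => in_i; case: ifP => in_j; rewrite ?mul0mx ?mulmx0 ?if_same //.
- rewrite orthE; try lia.
  by congr (if _ then _ else _); apply/eqP/eqP; lia.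
- by case: eqP => // eq_ij; rewrite eq_ij in_j in in_i.
Qed.

Lemma pad_idems_tridiag_exp_eq0 t delta E B :
  (forall i j, (i <= delta)%N -> (j <= delta)%N ->
     E i *m E j = if i == j then E i else 0) ->
  (forall i, (i <= delta)%N ->
     (E i *m B <= \sum_(0 <= j < delta.+1 | (i <= j.+1)%N && (j <= i.+1)%N) E j)%MS) ->
  forall i j k, (k < maxn i j - minn i j)%N ->
    pad_idems t delta E i *m B ^+ k *m pad_idems t delta E j = 0.
Proof.
move=> orthE triB i j k lt_k; rewrite /pad_idems.
case: ifP => in_i; case: ifP => in_j; rewrite ?mul0mx ?mulmx0 //.
by apply: (tridiag_mul_exp_eq0 orthE triB); lia.
Qed.

Section Eigenvalues.
Variables (d delta t : nat) (A : 'M[F]_n) (E : nat -> 'M[F]_n) (th : nat -> F).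
Hypotheses (le_delta : (delta <= d)%N) (le_t : (t <= d - delta)%N).
Hypothesis primE : prim_idems delta A E (fun j => th (t + j)%N).

Let V k := eigenspace A (th (t + k)%N).

Let V_mul_pad_idems k i : (k <= delta)%N ->
  V k *m pad_idems t delta E i = if i == (t + k)%N then V k else 0.
Proof.
move=> le_k; have [_ _ _ projE] := primE; rewrite /pad_idems.
case: ifP => in_i; last by rewrite mulmx0; case: eqP => // eq_i; lia.
rewrite projE //; last by lia.
by congr (if _ then _ else _); apply/eqP/eqP; lia.
Qed.

Lemma pad_idems_sum1 : \sum_(0 <= i < d.+1) pad_idems t delta E i = 1%:M.
Proof.
have [_ _ span _] := primE.
apply: (eq_mx_on_spanning span) => k le_k.
rewrite mulmx1 mulmx_sumr (eq_bigr _ (fun i _ => V_mul_pad_idems i le_k)).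
by rewrite -big_mkcond big_nat1_eq ifT //; lia.
Qed.

Lemma pad_idems_expansion : A = \sum_(0 <= i < d.+1) th i *: pad_idems t delta E i.
Proof.
have [_ _ span _] := primE.
apply: (eq_mx_on_spanning span) => k le_k.
have /eigenspaceP -> : (V k <= V k)%MS by [].
rewrite mulmx_sumr (eq_bigr (fun i => if i == (t + k)%N then th i *: V k else 0)).
  by rewrite -big_mkcond big_nat1_eq ifT //; lia.
by move=> i _; rewrite -scalemxAr V_mul_pad_idems //; case: eqP => [->|]; rewrite ?scaler0.
Qed.

End Eigenvalues.
End PaddedIdempotents.

Unset Implicit Arguments.
Theorem proposition5p5 (F : fieldType) (d : nat) (th ths : nat -> F)
  (delta r t n : nat) (A As : 'M[F]_n) (E Es : nat -> 'M[F]_n) :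
  scalars_ok d th ths ->
  (delta <= d)%N -> (r <= d - delta)%N -> (t <= d - delta)%N ->
  TD_system delta A E As Es (fun j => th (t + j)%N) (fun j => ths (r + j)%N) ->
  exists (ta : 'M[F]_n) (te : nat -> 'M[F]_n) (tas : 'M[F]_n) (tes : nat -> 'M[F]_n),
    [/\ T_module d th ths ta te tas tes,
        ta = A /\ tas = As,
        forall i, (i <= d)%N ->
          te i = if (t <= i)%N && (i <= t + delta)%N then E (i - t)%N else 0,
        forall i, (i <= d)%N ->
          tes i = if (r <= i)%N && (i <= r + delta)%N then Es (i - r)%N else 0 &
        T_irreducible d ta te tas tes].
Proof.
move=> _ le_delta le_r le_t [n_gt0 [primE primEs] triAs triA irrAAs].
have orthE := prim_idems_orthogonal primE.
have orthEs := prim_idems_orthogonal primEs.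
exists A, (pad_idems t delta E), As, (pad_idems r delta Es); split => //.
- split.
  + by split=> i j _ _; apply: pad_idems_orthogonal.
  + by split; [apply: (pad_idems_sum1 le_delta le_t primE)
               | apply: (pad_idems_sum1 le_delta le_r primEs)].
  + by split; [apply: (pad_idems_expansion le_delta le_t primE)
               | apply: (pad_idems_expansion le_delta le_r primEs)].
  + by move=> i j k _ _ _; apply: pad_idems_tridiag_exp_eq0.
  + by move=> i j k _ _ _; apply: pad_idems_tridiag_exp_eq0.
- by split=> // W invA invAs _ _; apply: irrAAs.
Qed.
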